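(* Let $0<q<1$. Define the $q$-Bernoulli numbers $b_{n,q}$ and $q$-Bernoulli polynomials $B_{n,q}(x)$ by \[ \frac{t}{e_q(t)-1}=\sum_{n=0}^\infty b_{n,q}\frac{t^n}{[n]_q!},\qquad \frac{t}{e_q(t)-1}e_q(tx)=\sum_{n=0}^\infty B_{n,q}(x)\frac{t^n}{[n]_q!}. \] Then for every positive integer $n$, $B_{n,q}(x)$ satisfies the $q$-difference equation \[ \sum_{k=2}^{n}\frac{q^{n-k-1}b_{k,q}}{[k]_q!}D_{q,x}^{k}B_{n,q}(x)-q^n\left(x-\frac{1}{q[2]_q}\right)D_{q,x}B_{n,q}(x)+[n]_qB_{n,q}(qx)=0, \] i.e. \[ \frac{b_{n,q}}{q[n]_q!}D_{q,x}^nB_{n,q}(x)+\frac{b_{n-1,q}}{[n-1]_q!}D_{q,x}^{n-1}B_{n,q}(x)+\dots+q^{n-3}\frac{b_{2,q}}{[2]_q!}D_{q,x}^2B_{n,q}(x)-q^n\left(x-\frac{1}{q[2]_q}\right)D_{q,x}B_{n,q}(x)+[n]_qB_{n,q}(qx)=0. \]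
   Context: $[n]_q=\frac{1-q^n}{1-q}$, $[0]_q!=1$, $[n]_q!=[n]_q\cdots[1]_q$, $e_q(t)=\sum_{n\ge0}\frac{t^n}{[n]_q!}$. The $q$-derivative is $D_{q,x}f(x)=\frac{f(qx)-f(x)}{(q-1)x}$ (on polynomials $D_{q,x}x^n=[n]_qx^{n-1}$), and $D_{q,x}^k$ is its $k$-fold iterate. *)

From HB Require Import structures.
From mathcomp Require Import all_boot all_order all_algebra.
Set Implicit Arguments. Unset Strict Implicit. Unset Printing Implicit Defensive.
Import Order.TTheory GRing.Theory Num.Theory.
Local Open Scope ring_scope.

Section QDefs.
Variable R : realFieldType.
Variable q : R.

Definition qnat (n : nat) : R := (1 - q ^+ n) / (1 - q).

Definition qfact (n : nat) : R := \prod_(i < n) qnat i.+1.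

(* n-th coefficient of the formal power series e_q(t) - 1 *)
Definition eqm1_coef (n : nat) : R := if n == 0%N then 0 else 1 / qfact n.

(* b is the coefficient sequence of t/(e_q(t)-1) = sum_n b_n t^n/[n]_q!,
   as a formal power series: (e_q(t) - 1) * sum_n b_n t^n/[n]_q! = t. *)
Definition is_qBernoulli_numbers (b : nat -> R) : Prop :=
  forall n : nat,
    \sum_(k < n.+1) (b k / qfact k) * eqm1_coef (n - k) = (n == 1%N)%:R.

(* B_{n,q}(x): coefficient of t^n/[n]_q! in (t/(e_q(t)-1)) e_q(tx), i.e.
   B_{n,q}(x)/[n]_q! = sum_{k<=n} (b_k/[k]_q!) (x^{n-k}/[n-k]_q!). *)
Definition qBpoly (b : nat -> R) (n : nat) : {poly R} :=
  qfact n *: \sum_(k < n.+1) ((b k / (qfact k * qfact (n - k))) *: 'X^(n - k)).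

Definition Dq (p : {poly R}) : {poly R} :=
  \poly_(i < (size p).-1) (qnat i.+1 * p`_i.+1).

Definition Dqn (k : nat) (p : {poly R}) : {poly R} := iter k Dq p.

End QDefs.

From HB Require Import structures.
From mathcomp Require Import all_boot all_order all_algebra.
From mathcomp Require Import ring zify.
Import Order.TTheory GRing.Theory Num.Theory.
Local Open Scope ring_scope.
Set Implicit Arguments. Unset Strict Implicit. Unset Printing Implicit Defensive.

(* With beta_k = b_k / [k]_q!, the series B(t) = sum_k beta_k t^k equals
   t / (e_q(t) - 1).  Since e_q(qt) = (1 + (q - 1) t) e_q(t), it satisfies the
   functional equation q (B(t) - B(qt)) = (q - 1) (B(t) - 1 + t) B(qt), whose
   coefficients give the recurrence
     sum_(k=2..m) q^(m-k) beta_k beta_(m-k) + q [m]_q beta_m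
       + q^m beta_(m-1) / [2]_q = 0                          (m >= 1).
   As B_{n,q}(x) = [n]_q! sum_i beta_(n-i) x^i / [i]_q! and D_q shifts these
   coefficients by one index, the coefficient of x^i in the q-difference
   equation is q^(i-1) [n]_q! / [i]_q! times this recurrence at m = n - i.
   Power series are handled through their truncations: a congruence modulo
   t^N is a divisibility by 'X^N. *)

Lemma dvdp_XnP (R : fieldType) (N : nat) (p : {poly R}) :
  reflect (forall i, (i < N)%N -> p`_i = 0) ('X^N %| p).
Proof.
apply: (iffP idP) => [/dvdpP[r ->] i ltiN | p_lowN]; first by rewrite coefMXn ltiN.
rewrite -(poly_take_drop N p) (_ : take_poly N p = 0) ?add0r ?dvdp_mull //.
by apply/polyP => i; rewrite coef_take_poly coef0; case: ifP => // /p_lowN.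
Qed.

Lemma coef_comp_scaleX (R : comNzRingType) (c : R) (p : {poly R}) i :
  (p \Po (c *: 'X))`_i = c ^+ i * p`_i.
Proof.
rewrite coef_comp_poly.
rewrite (eq_bigr (fun j : 'I_(size p) => if (j : nat) == i then c ^+ i * p`_i else 0)).
  rewrite -big_mkcond /= (big_ord1_eq _ (fun=> c ^+ i * p`_i) i (size p)).
  by case: ltnP => // le_p_i; rewrite nth_default ?mulr0.
move=> j _; rewrite exprZn coefZ coefXn eq_sym.
by case: eqP => [->|_]; [rewrite mulr1 mulrC | rewrite !mulr0].
Qed.

Lemma dvdp_Xn_comp_scaleX (R : fieldType) (c : R) (N : nat) (p : {poly R}) :
  'X^N %| p -> 'X^N %| p \Po (c *: 'X).
Proof.
by move=> /dvdp_XnP p_lowN; apply/dvdp_XnP => i ltiN; rewrite coef_comp_scaleX p_lowN ?mulr0.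
Qed.

Lemma expfz_subn1 (R : fieldType) (x : R) (m k : nat) :
  x != 0 -> (k <= m)%N -> x ^ (m%:Z - k%:Z - 1) = x ^+ (m - k) / x.
Proof. by move=> x_neq0 le_km; rewrite subzn // expfzDr // exprN1. Qed.

Section QBernoulli.
Variables (R : realFieldType) (q : R).
Hypotheses (q_gt0 : 0 < q) (q_lt1 : q < 1).

Let q_neq0 : q != 0. Proof. by rewrite gt_eqF. Qed.
Let q1_neq0 : 1 - q != 0. Proof. by rewrite subr_eq0 eq_sym lt_eqF. Qed.

Lemma qnat_gt0 k : (0 < k)%N -> 0 < qnat q k.
Proof.
by move=> k_gt0; rewrite divr_gt0 // subr_gt0 ?exprn_ilt1 ?ltW // -lt0n.
Qed.

Lemma qfactS k : qfact q k.+1 = qfact q k * qnat q k.+1.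
Proof. by rewrite /qfact big_ord_recr. Qed.

Lemma qfact_gt0 k : 0 < qfact q k.
Proof.
elim: k => [|k IHk]; first by rewrite /qfact big_ord0 ltr01.
by rewrite qfactS mulr_gt0 // qnat_gt0.
Qed.

Lemma qnat1 : qnat q 1 = 1.
Proof. by rewrite /qnat expr1 divff. Qed.

Lemma qnat2 : qnat q 2 = 1 + q.
Proof. by rewrite /qnat expr2; field. Qed.

Lemma qfact1 : qfact q 1 = 1.
Proof. by rewrite /qfact big_ord1 qnat1. Qed.

Lemma qnatD m k : qnat q (m + k) = qnat q m + q ^+ m * qnat q k.
Proof. by rewrite /qnat exprD; field. Qed.

Local Notation qdil p := (p \Po (q *: 'X)).

(* The truncation of (e_q(t) - 1) / t. *)
Definition qexp_quot N : {poly R} := \poly_(i < N) (qfact q i.+1)^-1.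

Lemma qexp_quot_dilation N :
  'X^N %| q%:P * qdil (qexp_quot N) - qexp_quot N - (q - 1)%:P * (1 + 'X * qexp_quot N).
Proof.
apply/dvdp_XnP => i ltiN.
rewrite !coefB !coefCM coef_comp_scaleX coefD coef1 coefXM !coef_poly ltiN.
case: i ltiN => [|i] ltiN /=; first by rewrite qfact1 invr1; ring.
rewrite (ltnW ltiN) qfactS [qnat q i.+2]/qnat.
have qfact_neq0 : qfact q i.+1 != 0 by rewrite gt_eqF ?qfact_gt0.
have q2_neq0 : 1 - q ^+ i.+2 != 0 by rewrite subr_eq0 eq_sym lt_eqF // exprn_ilt1 // ltW.
by rewrite exprS in q2_neq0 *; field; apply/and3P.
Qed.

Variable b : nat -> R.
Hypothesis hb : is_qBernoulli_numbers q b.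

Definition qbeta k := b k / qfact q k.

Definition qBernoulli_trunc N : {poly R} := \poly_(i < N) qbeta i.

Lemma qBernoulli_trunc_inv N : 'X^N %| qBernoulli_trunc N * qexp_quot N - 1.
Proof.
apply/dvdp_XnP => i ltiN; apply/eqP.
rewrite coefB coef1 coefM -(hb i.+1) [X in _ - X]big_ord_recr /= subnn /eqm1_coef /=.
rewrite mulr0 addr0 subr_eq0.
apply/eqP/eq_bigr => j _; have le_ji := leq_ord j.
rewrite !coef_poly (leq_ltn_trans le_ji ltiN) (leq_ltn_trans (leq_subr j i) ltiN).
by rewrite subSn // div1r.
Qed.

Lemma qbeta0 : qbeta 0 = 1.
Proof.
have := hb 1; rewrite !big_ord_recr big_ord0 /= /eqm1_coef /= qfact1.
by rewrite mulr0 addr0 add0r div1r invr1 mulr1.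
Qed.

Lemma qbeta1 : qbeta 1 = - (qnat q 2)^-1.
Proof.
have : \sum_(k < 3) qbeta k * eqm1_coef q (2 - k) = 0 := hb 2.
rewrite !big_ord_recr big_ord0 /= /eqm1_coef /= qfactS qfact1 qbeta0.
rewrite add0r !mul1r invr1 mulr1 mulr0 addr0 => /eqP.
by rewrite addrC addr_eq0 => /eqP.
Qed.

Lemma qBernoulli_trunc_functional_eq N :
  'X^N %| (q - 1)%:P * ((qBernoulli_trunc N - 1 + 'X) * qdil (qBernoulli_trunc N))
          + q%:P * (qdil (qBernoulli_trunc N) - qBernoulli_trunc N).
Proof.
case: N => [|N]; first by rewrite expr0 dvd1p.
have e1 := qBernoulli_trunc_inv N.+1; have e2 := qexp_quot_dilation N.+1.
set B := qBernoulli_trunc N.+1 in e1 *; set H := qexp_quot N.+1 in e1 e2 *.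
have e1' : 'X^(N.+1) %| qdil B * qdil H - 1.
  by move: (dvdp_Xn_comp_scaleX q e1); rewrite comp_polyB comp_polyM -polyC1 comp_polyC.
have H0 : H.[0] = 1 by rewrite horner_coef0 coef_poly qfact1 invr1.
have coprime_H : coprimep ('X^(N.+1)) (H * qdil H).
  apply: coprimep_expl; rewrite coprimep_sym -[X in coprimep _ X]subr0 -polyC0.
  by rewrite coprimep_XsubC rootE hornerM horner_comp hornerZ hornerX mulr0 H0 mulr1 oner_eq0.
(* H(t) H(qt) is a unit modulo t^N, and multiplying by it turns the claim
   into a combination of the congruences e1, e1' and e2. *)
rewrite -(Gauss_dvdpl _ coprime_H) polyCB polyC1.
rewrite polyCB polyC1 in e2.
have -> : ((q%:P - 1) * ((B - 1 + 'X) * qdil B) + q%:P * (qdil B - B)) * (H * qdil H)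
    = (q%:P - 1) * ((B * H - 1) * (qdil B * qdil H) + (1 - H + 'X * H) * (qdil B * qdil H - 1))
      + q%:P * ((qdil B * qdil H - 1) * H - (B * H - 1) * qdil H)
      - (q%:P * qdil H - H - (q%:P - 1) * (1 + 'X * H)) by ring.
apply: dvdp_sub e2; apply: dvdp_add; apply: dvdp_mull.
  by apply: dvdp_add; [exact: dvdp_mulr | exact: dvdp_mull].
by apply: dvdp_sub; exact: dvdp_mulr.
Qed.

Lemma qBernoulli_rec m :
  \sum_(2 <= k < m.+2) q ^+ (m.+1 - k) * qbeta k * qbeta (m.+1 - k)
  + q * qnat q m.+1 * qbeta m.+1 + q ^+ m.+1 * qbeta m / qnat q 2 = 0.
Proof.
have /dvdp_XnP/(_ m.+1 (ltnSn _)) := qBernoulli_trunc_functional_eq m.+2.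
set B := qBernoulli_trunc m.+2.
have coef_trunc j : (j < m.+2)%N -> B`_j = qbeta j by rewrite coef_poly => ->.
rewrite coefD !coefCM coefB coef_comp_scaleX coefM.
rewrite -(big_mkord xpredT (fun j => (B - 1 + 'X)`_j * (qdil B)`_(m.+1 - j))).
rewrite big_ltn // big_ltn //=.
rewrite (eq_big_nat _ _ (F2 := fun k => q ^+ (m.+1 - k) * qbeta k * qbeta (m.+1 - k))); last first.
  move=> k /andP[le2k ltkm].
  rewrite coefD coefB coef1 coefX coef_comp_scaleX !coef_trunc ?ltnS ?leq_subr //.
  have [-> ->] : (k == 0%N) = false /\ (k == 1%N) = false by lia.
  by rewrite subr0 addr0 mulrCA mulrA.
rewrite !coefD !coefN !coef1 !coefX !coef_comp_scaleX !subn0 subn1 !coef_trunc //=.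
rewrite qbeta0 qbeta1.
set S := \sum_(2 <= k < m.+2) _ => h.
have qm1_neq0 : q - 1 != 0 by rewrite subr_eq0 lt_eqF.
have q2_neq0 : 1 + q != 0 by rewrite gt_eqF ?addr_gt0.
apply: (mulfI qm1_neq0); rewrite mulr0 -{}h qnat2 /qnat exprS.
by field; apply/andP.
Qed.

Lemma coef_Dq (p : {poly R}) i : (Dq q p)`_i = qnat q i.+1 * p`_i.+1.
Proof.
rewrite coef_poly; case: ltnP => // le_p_i.
by rewrite -subn1 leq_subLR add1n in le_p_i; rewrite nth_default ?mulr0.
Qed.

Lemma coef_XDq (p : {poly R}) i : ('X * Dq q p)`_i = qnat q i * p`_i.
Proof. by rewrite coefXM; case: i => [|i]; rewrite ?coef_Dq // /qnat subrr !mul0r. Qed.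

Lemma coef_qBpoly n i :
  (qBpoly q b n)`_i = if (i <= n)%N then qfact q n / qfact q i * qbeta (n - i) else 0.
Proof.
rewrite /qBpoly (reindex_inj rev_ord_inj) /=.
rewrite (eq_bigr (fun j : 'I_n.+1 => (b (n - j) / (qfact q (n - j) * qfact q j)) *: 'X^j)).
  rewrite -(poly_def n.+1 (fun j => b (n - j) / (qfact q (n - j) * qfact q j))).
  rewrite coefZ coef_poly ltnS.
  by case: leqP => _; [rewrite /qbeta invfM; ring | rewrite mulr0].
by move=> j _; rewrite subSS subKn // -ltnS.
Qed.

Lemma coef_Dqn_qBpoly n k i :
  (Dqn q k (qBpoly q b n))`_i =
  if (i + k <= n)%N then qfact q n / qfact q i * qbeta (n - (i + k)) else 0.
Proof.
elim: k i => [|k IHk] i; first by rewrite addn0 coef_qBpoly.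
rewrite /Dqn iterS -/(Dqn q k _) coef_Dq IHk addSnnS.
case: ifP => _; last by rewrite mulr0.
have qfact_neq0 : qfact q i != 0 by rewrite gt_eqF ?qfact_gt0.
have qnat_neq0 : qnat q i.+1 != 0 by rewrite gt_eqF ?qnat_gt0.
by rewrite qfactS; field; apply/andP.
Qed.

Definition qdiff_op n (p : {poly R}) : {poly R} :=
  \sum_(2 <= k < n.+1) (q ^ (n%:Z - k%:Z - 1) * b k / qfact q k) *: Dqn q k p
  - q ^+ n *: (('X - (1 / (q * qnat q 2))%:P) * Dq q p)
  + qnat q n *: qdil p.

Lemma horner_qdiff_op n p x :
  (qdiff_op n p).[x] =
  \sum_(2 <= k < n.+1) (q ^ (n%:Z - k%:Z - 1) * b k / qfact q k) * (Dqn q k p).[x]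
  - q ^+ n * (x - 1 / (q * qnat q 2)) * (Dq q p).[x] + qnat q n * p.[q * x].
Proof.
rewrite !hornerD hornerN horner_sum !hornerZ hornerM hornerXsubC horner_comp hornerZ hornerX.
rewrite mulrA; congr (_ - _ + _).
by apply: eq_bigr => k _; rewrite hornerZ.
Qed.

Lemma coef_qdiff_sum i m :
  (\sum_(2 <= k < (i + m).+1)
      (q ^ ((i + m)%:Z - k%:Z - 1) * b k / qfact q k) *: Dqn q k (qBpoly q b (i + m)))`_i
  = qfact q (i + m) / qfact q i * (q ^+ i / q)
    * \sum_(2 <= k < m.+1) q ^+ (m - k) * qbeta k * qbeta (m - k).
Proof.
rewrite coef_sum (big_nat_widen _ m.+1 (i + m).+1) ?ltnS ?leq_addl // big_distrr /= [RHS]big_mkcond.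
apply: eq_bigr => k _; rewrite coefZ coef_Dqn_qBpoly leq_add2l ltnS.
case: leqP => [le_km | _]; last by rewrite mulr0.
rewrite expfz_subn1 ?(leq_trans le_km (leq_addl _ _)) // subnDl -addnBA // exprD /qbeta.
ring.
Qed.

Lemma qdiff_op_qBpoly n : qdiff_op n (qBpoly q b n) = 0.
Proof.
apply/polyP => i; rewrite coef0 /qdiff_op coefD coefB !coefZ mulrBl coefB coef_XDq coefCM.
rewrite coef_Dq coef_comp_scaleX !coef_qBpoly.
have [lt_ni | le_in] := ltnP n i.
  rewrite coef_sum big1 => [|k _]; last by rewrite coefZ coef_Dqn_qBpoly leqNgt ltn_addr ?mulr0.
  by rewrite ltnNge (ltnW lt_ni) /=; ring.
have [m ->] : exists m, n = (i + m)%N by exists (n - i)%N; rewrite subnKC.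
rewrite coef_qdiff_sum addKn.
case: m => [|m]; first by rewrite big_geq // addn0 ltnn; ring.
have qnat_im : qnat q (i + m.+1) = qnat q m.+1 + q ^+ m.+1 * qnat q i.
  by rewrite addnC qnatD.
rewrite addnS ltnS leq_addr subSS addKn (qfactS i) -addnS qnat_im exprD.
rewrite -[RHS](mulr0 (qfact q (i + m.+1) / qfact q i * (q ^+ i / q))).
rewrite -[X in _ = _ * X](qBernoulli_rec m).
have qfact_neq0 : qfact q i != 0 by rewrite gt_eqF ?qfact_gt0.
have qnat_neq0 k : qnat q k.+1 != 0 by rewrite gt_eqF ?qnat_gt0.
set S := \sum_(2 <= k < m.+2) _.
by field; rewrite q_neq0 qfact_neq0 !qnat_neq0.
Qed.

End QBernoulli.

Theorem theorem4 (R : realFieldType) (q : R) (hq0 : 0 < q) (hq1 : q < 1)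
  (b : nat -> R) (hb : is_qBernoulli_numbers q b)
  (n : nat) (hn : (0 < n)%N) (x : R) :
  \sum_(2 <= k < n.+1)
      (q ^ (n%:Z - k%:Z - 1) * b k / qfact q k) * (Dqn q k (qBpoly q b n)).[x]
  - q ^+ n * (x - 1 / (q * qnat q 2)) * (Dq q (qBpoly q b n)).[x]
  + qnat q n * (qBpoly q b n).[q * x] = 0.
Proof.
(* The identity also holds for n = 0. *)
by rewrite -horner_qdiff_op qdiff_op_qBpoly // horner0.
Qed.
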